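(* For $n\ge 3$, the commutator subgroup $[B_n,B_n]$ is densely ordered by the (restriction of the) Dehornoy ordering; i.e. it has no least positive element, equivalently for any $f<g$ in $[B_n,B_n]$ there is $h\in[B_n,B_n]$ with $f<h<g$.
   Context: $B_n$ is the Artin braid group with generators $\sigma_1,\dots,\sigma_{n-1}$. A word in the generators is $i$-positive if it contains only $\sigma_1,\dots,\sigma_i$ and their inverses, $\sigma_i$ occurs, and every occurrence of $\sigma_i$ has positive exponent; a braid is $i$-positive if some representative word is. The Dehornoy ordering is the left-invariant total order on $B_n$ whose positive cone consists of all braids that are $i$-positive for some $i$. *)

From mathcomp Require Import all_boot.
From Stdlib Require Import Relations.
Set Implicit Arguments. Unset Strict Implicit. Unset Printing Implicit Defensive.

(* A letter of B_n: (k, e) with k : 'I_n.-1 stands for sigma_(k+1)^(+1) if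
   e = true and sigma_(k+1)^(-1) if e = false. *)
Definition bletter (n : nat) := ('I_n.-1 * bool)%type.
Definition bword (n : nat) := seq (bletter n).

Inductive braid_step (n : nat) : bword n -> bword n -> Prop :=
| bs_free (u v : bword n) (a : 'I_n.-1) (e : bool) :
    braid_step (u ++ [:: (a, e); (a, ~~ e)] ++ v) (u ++ v)
| bs_far (u v : bword n) (a b : 'I_n.-1) :
    (a.+1 < b)%N ->
    braid_step (u ++ [:: (a, true); (b, true)] ++ v) (u ++ [:: (b, true); (a, true)] ++ v)
| bs_braid (u v : bword n) (a b : 'I_n.-1) :
    nat_of_ord b = (nat_of_ord a).+1 ->
    braid_step (u ++ [:: (a, true); (b, true); (a, true)] ++ v)
               (u ++ [:: (b, true); (a, true); (b, true)] ++ v).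

Definition braid_eq (n : nat) : relation (bword n) :=
  clos_refl_sym_trans (bword n) (@braid_step n).

Definition binv (n : nat) (w : bword n) : bword n :=
  rev (map (fun l : bletter n => (l.1, ~~ l.2)) w).

(* i-positive word (i = k+1): only sigma_1..sigma_(k+1)^{+-1} occur,
   sigma_(k+1) occurs, and only with positive exponent. *)
Definition ipositive_word (n : nat) (k : 'I_n.-1) (w : bword n) : Prop :=
  (forall l, l \in w -> (nat_of_ord l.1 <= k)%N) /\
  (k, true) \in w /\ (k, false) \notin w.

Definition dehornoy_pos (n : nat) (w : bword n) : Prop :=
  exists w' : bword n, braid_eq w w' /\ exists k : 'I_n.-1, ipositive_word k w'.

Definition dehornoy_lt (n : nat) (f g : bword n) : Prop :=
  dehornoy_pos (binv f ++ g).

Definition bcomm (n : nat) (a b : bword n) : bword n :=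
  binv a ++ binv b ++ a ++ b.

Definition in_commutator_subgroup (n : nat) (w : bword n) : Prop :=
  exists ps : seq (bword n * bword n),
    braid_eq w (flatten (map (fun p => bcomm p.1 p.2) ps)).

(* An element f^-1 g of the commutator subgroup has exponent sum zero, so it
   cannot be sigma_1-positive: it is sigma_i-positive for some i >= 2, and is
   represented by a word u sigma_i v with u in sigma_1, ..., sigma_(i-1).
   Writing a = sigma_(i-1) and b = sigma_i, the element q = u a^-1 b u^-1 is
   the conjugate by u of the commutator [a, (a b)^-1], and it is i-positive.
   Put h = f q.  Then f^-1 h = q is i-positive, and by the braid relation
   b^-1 a b = a b a^-1 also h^-1 g = u b^-1 a b v = u a b a^-1 v is. *)
From Stdlib Require Import Relations Setoid Morphisms Lia.
From mathcomp Require Import all_boot zify.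
Set Implicit Arguments. Unset Strict Implicit. Unset Printing Implicit Defensive.

Section BraidWords.
Variable n : nat.
Local Notation word := (bword n).

Lemma braid_eq_ctx (x y w w' : word) :
  braid_eq w w' -> braid_eq (x ++ w ++ y) (x ++ w' ++ y).
Proof.
have ctxA (u v l : word) : x ++ (u ++ l ++ v) ++ y = (x ++ u) ++ l ++ (v ++ y).
  by rewrite !catA.
elim=> [{}w {}w' st|{}w|{}w {}w' _ IH|w1 w2 w3 _ IH1 _ IH2].
- apply: rst_step; case: st => [u v a e|u v a b ab|u v a b ab].
  + have -> : x ++ (u ++ v) ++ y = (x ++ u) ++ (v ++ y) by rewrite !catA.
    by rewrite ctxA; apply: bs_free.
  + by rewrite !ctxA; apply: bs_far.
  + by rewrite !ctxA; apply: bs_braid.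
- exact: rst_refl.
- exact: rst_sym.
- exact: rst_trans IH2.
Qed.

Lemma braid_eq_cat (w1 w1' w2 w2' : word) :
  braid_eq w1 w1' -> braid_eq w2 w2' -> braid_eq (w1 ++ w2) (w1' ++ w2').
Proof.
move=> e1 e2; apply: rst_trans (_ : braid_eq (w1' ++ w2) _).
  by have := braid_eq_ctx [::] w2 e1.
by have := braid_eq_ctx w1' [::] e2; rewrite !cats0.
Qed.

Lemma braid_eq_free (x y : word) a e :
  braid_eq (x ++ [:: (a, e); (a, ~~ e)] ++ y) (x ++ y).
Proof. exact/rst_step/bs_free. Qed.

Lemma braid_eq_braid (x y : word) (a b : 'I_n.-1) : nat_of_ord b = a.+1 ->
  braid_eq (x ++ [:: (a, true); (b, true); (a, true)] ++ y)
           (x ++ [:: (b, true); (a, true); (b, true)] ++ y).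
Proof. by move=> ab; apply/rst_step/bs_braid. Qed.

Lemma binv_cat (w1 w2 : word) : binv (w1 ++ w2) = binv w2 ++ binv w1.
Proof. by rewrite /binv map_cat rev_cat. Qed.

Lemma binvK : involutive (@binv n).
Proof.
move=> w; rewrite /binv map_rev revK -map_comp map_id_in // => -[a e] _ /=.
by rewrite negbK.
Qed.

Lemma binv_conj (u w : word) : binv (u ++ w ++ binv u) = u ++ binv w ++ binv u.
Proof. by rewrite !binv_cat binvK catA. Qed.

Lemma binvKl (u w : word) : braid_eq (binv u ++ u ++ w) w.
Proof.
elim: u w => [|[a e] u IH] w /=; first exact: rst_refl.
rewrite -cat1s binv_cat -!catA /=.
apply: rst_trans (IH w).
by have := braid_eq_free (binv u) (u ++ w) a (~~ e); rewrite negbK.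
Qed.

End BraidWords.

#[global] Instance braid_eq_Equivalence n : Equivalence (@braid_eq n).
Proof. split; [exact: rst_refl | exact: rst_sym | exact: rst_trans]. Qed.

#[global] Instance cat_braid_eq_Proper n :
  Proper (@braid_eq n ==> @braid_eq n ==> @braid_eq n) (@cat (bletter n)).
Proof. by move=> ? ? e1 ? ? e2; apply: braid_eq_cat. Qed.

Section AdjacentGenerators.
Variables (n : nat) (a b : 'I_n.-1).
Hypothesis ab : nat_of_ord b = (nat_of_ord a).+1.

Lemma braid_eq_conj_adj :
  braid_eq [:: (b, false); (a, true); (b, true)] [:: (a, true); (b, true); (a, false)].
Proof.
have braid := braid_eq_braid [:: (b, false)] [:: (a, false)] ab.
have := braid_eq_free [:: (b, false); (a, true); (b, true)] [::] a true.
rewrite cats0 => <-; rewrite [X in braid_eq X _]braid.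
exact: braid_eq_free [::] [:: (a, true); (b, true); (a, false)] b false.
Qed.

Lemma bcomm_adj :
  braid_eq (bcomm [:: (a, true)] [:: (b, false); (a, false)]) [:: (a, false); (b, true)].
Proof.
have braid := braid_eq_braid [:: (a, false)] [:: (b, false); (a, false)] ab.
have free := braid_eq_free [:: (a, false); (b, true); (a, true)] [:: (a, false)] b true.
rewrite [X in braid_eq X _]braid [X in braid_eq X _]free.
by have := braid_eq_free [:: (a, false); (b, true)] [::] a true; rewrite cats0.
Qed.

End AdjacentGenerators.

Section ExponentSum.
Variable n : nat.
Local Notation word := (bword n).

Definition count_pos (w : word) := count (fun l : bletter n => l.2) w.
Definition count_neg (w : word) := count (fun l : bletter n => ~~ l.2) w.

Lemma braid_eq_count (w w' : word) :
  braid_eq w w' -> count_pos w + count_neg w' = count_pos w' + count_neg w.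
Proof.
rewrite /count_pos /count_neg.
elim=> [? ? st|?|? ? _ IH|? ? ? _ IH1 _ IH2]; try lia.
by case: st => *; rewrite !count_cat /=; lia.
Qed.

Lemma count_pos_cat (w1 w2 : word) : count_pos (w1 ++ w2) = count_pos w1 + count_pos w2.
Proof. exact: count_cat. Qed.

Lemma count_neg_cat (w1 w2 : word) : count_neg (w1 ++ w2) = count_neg w1 + count_neg w2.
Proof. exact: count_cat. Qed.

Lemma count_pos_binv (w : word) : count_pos (binv w) = count_neg w.
Proof. by rewrite /count_pos /binv count_rev count_map. Qed.

Lemma count_neg_binv (w : word) : count_neg (binv w) = count_pos w.
Proof. by rewrite -{2}[w]binvK count_pos_binv. Qed.

Definition balanced (w : word) := count_pos w = count_neg w.

Lemma balanced_braid_eq (w w' : word) : braid_eq w w' -> balanced w -> balanced w'.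
Proof. by move=> /braid_eq_count; rewrite /balanced; lia. Qed.

Lemma balanced_cat (w1 w2 : word) : balanced w1 -> balanced w2 -> balanced (w1 ++ w2).
Proof. by rewrite /balanced count_pos_cat count_neg_cat; lia. Qed.

Lemma balanced_binv (w : word) : balanced w -> balanced (binv w).
Proof. by rewrite /balanced count_pos_binv count_neg_binv. Qed.

Lemma balanced_bcomm (x y : word) : balanced (bcomm x y).
Proof.
rewrite /balanced /bcomm !(count_pos_cat, count_neg_cat).
by rewrite !count_pos_binv !count_neg_binv; lia.
Qed.

Lemma commutator_subgroup_balanced (w : word) :
  in_commutator_subgroup w -> balanced w.
Proof.
case=> ps e; apply: balanced_braid_eq (rst_sym _ _ _ _ e) _ => {e}.
by elim: ps => [|p ps IH] //=; apply: balanced_cat (balanced_bcomm _ _) IH.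
Qed.

Lemma commutator_subgroup_braid_eq (w w' : word) :
  braid_eq w w' -> in_commutator_subgroup w' -> in_commutator_subgroup w.
Proof. by move=> e [ps e']; exists ps; rewrite e. Qed.

Lemma commutator_subgroup_cat (w1 w2 : word) :
  in_commutator_subgroup w1 -> in_commutator_subgroup w2 ->
  in_commutator_subgroup (w1 ++ w2).
Proof.
case=> ps1 e1 [ps2 e2]; exists (ps1 ++ ps2).
by rewrite map_cat flatten_cat e1 e2; reflexivity.
Qed.

Lemma commutator_subgroup_bcomm (x y : word) : in_commutator_subgroup (bcomm x y).
Proof. by exists [:: (x, y)]; rewrite /= cats0; reflexivity. Qed.

Lemma bcomm_conj (u x y : word) :
  braid_eq (bcomm (u ++ x ++ binv u) (u ++ y ++ binv u)) (u ++ bcomm x y ++ binv u).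
Proof. by rewrite /bcomm !binv_conj -!catA !binvKl; reflexivity. Qed.

Lemma commutator_subgroup_conj_bcomm (u x y : word) :
  in_commutator_subgroup (u ++ bcomm x y ++ binv u).
Proof.
apply: commutator_subgroup_braid_eq (commutator_subgroup_bcomm _ _).
by symmetry; apply: bcomm_conj.
Qed.

End ExponentSum.

Section Positivity.
Variables (n : nat) (k : 'I_n.-1).
Local Notation word := (bword n).

Definition inonneg_word (w : word) :=
  (forall l, l \in w -> (nat_of_ord l.1 <= k)%N) /\ (k, false) \notin w.

Definition below_word (w : word) := all (fun l : bletter n => (nat_of_ord l.1 < k)%N) w.

Lemma below_nonneg (w : word) : below_word w -> inonneg_word w.
Proof.
move=> /allP lt; split=> [l /lt /ltnW //|]; apply/negP => /lt /=.
by rewrite ltnn.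
Qed.

Lemma below_binv (w : word) : below_word w -> below_word (binv w).
Proof. by rewrite /below_word /binv all_rev all_map. Qed.

Lemma nonneg_cat (w1 w2 : word) :
  inonneg_word w1 -> inonneg_word w2 -> inonneg_word (w1 ++ w2).
Proof.
case=> le1 n1 [le2 n2]; split=> [l|]; last by rewrite mem_cat negb_or n1.
by rewrite mem_cat => /orP [/le1|/le2].
Qed.

Lemma below_cat (w1 w2 : word) : below_word (w1 ++ w2) = below_word w1 && below_word w2.
Proof. exact: all_cat. Qed.

Lemma ipositive_pivot (x y : word) :
  inonneg_word x -> inonneg_word y -> ipositive_word k (x ++ (k, true) :: y).
Proof.
case=> lex nx [ley ny]; split; last split.
- by move=> l; rewrite mem_cat in_cons => /or3P [/lex|/eqP ->|/ley].
- by rewrite mem_cat in_cons eqxx orbT.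
- by rewrite mem_cat in_cons (negbTE nx) (negbTE ny) xpair_eqE andbF.
Qed.

Lemma dehornoy_pos_braid_eq (w w' : word) :
  braid_eq w w' -> dehornoy_pos w' -> dehornoy_pos w.
Proof. by move=> e [w'' [e' pw]]; exists w''; split=> //; rewrite e. Qed.

Lemma ipositive_dehornoy_pos (w : word) : ipositive_word k w -> dehornoy_pos w.
Proof. by move=> pw; exists w; split; [reflexivity | exists k]. Qed.

Lemma ipositive_split (w : word) : ipositive_word k w ->
  exists u v, w = u ++ (k, true) :: v /\ below_word u /\ inonneg_word v.
Proof.
move=> pw; have [le [kin notin]] := pw.
set i := index (k, true) w.
have ew : w = take i w ++ (k, true) :: drop i.+1 w.
  by rewrite -drop_index // cat_take_drop.
exists (take i w), (drop i.+1 w); split=> //; split.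
- apply/allP => -[a e] l_in /=.
  have /le : (a, e) \in w by rewrite ew mem_cat l_in.
  rewrite leq_eqVlt => /orP [/eqP/val_inj /= ak|//]; move: l_in; rewrite ak.
  case: e => l_in.
    by move: l_in; rewrite in_take // -/i ltnn.
  by move: notin; rewrite ew mem_cat l_in.
- split=> [l l_in|]; first by apply: le; rewrite ew mem_cat in_cons l_in !orbT.
  by apply: contra notin => l_in; rewrite ew mem_cat in_cons l_in !orbT.
Qed.

Lemma balanced_ipositive_gt0 (w : word) :
  balanced w -> ipositive_word k w -> (0 < k)%N.
Proof.
move=> bal [le [kin notin]]; rewrite lt0n; apply/eqP => k0.
move: bal; rewrite /balanced.
have -> : count_neg w = 0.
  apply/eqP; rewrite -leqn0 leqNgt -has_count; apply/hasPn => -[a [] //] l_in /=.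
  have ak : a = k by apply/ord_inj/eqP; rewrite eqn_leq (le _ l_in) k0.
  by move: notin; rewrite -ak l_in.
by apply/eqP; rewrite -lt0n /count_pos -has_count; apply/hasP; exists (k, true).
Qed.

End Positivity.

Section DenseStep.
Variables (n : nat) (a k : 'I_n.-1) (u : bword n).
Hypothesis ak : nat_of_ord k = (nat_of_ord a).+1.
Hypothesis u_below : below_word k u.

Definition dense_witness := u ++ [:: (a, false); (k, true)] ++ binv u.
Local Notation q := dense_witness.

Lemma dense_witness_commutator : in_commutator_subgroup q.
Proof.
have := commutator_subgroup_conj_bcomm u [:: (a, true)] [:: (k, false); (a, false)].
by apply: commutator_subgroup_braid_eq; apply: braid_eq_ctx; symmetry; apply: bcomm_adj.
Qed.

Lemma below_adj e : below_word k [:: (a, e)].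
Proof. by rewrite /below_word /= ak ltnSn. Qed.

Lemma dense_witness_ipositive : ipositive_word k q.
Proof.
have -> : q = (u ++ [:: (a, false)]) ++ (k, true) :: binv u.
  by rewrite /dense_witness -catA.
apply: ipositive_pivot; apply: below_nonneg; last exact: below_binv.
by rewrite below_cat u_below below_adj.
Qed.

Lemma dense_witness_inv_cat (v : bword n) : inonneg_word k v ->
  dehornoy_pos (binv q ++ u ++ (k, true) :: v).
Proof.
move=> nv.
apply: (dehornoy_pos_braid_eq (w' := u ++ [:: (a, true); (k, true); (a, false)] ++ v)).
  rewrite /dense_witness binv_conj -!catA binvKl.
  exact: (braid_eq_ctx u v (braid_eq_conj_adj ak)).
have -> : u ++ [:: (a, true); (k, true); (a, false)] ++ v =
          (u ++ [:: (a, true)]) ++ (k, true) :: ([:: (a, false)] ++ v) by rewrite -catA.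
apply/ipositive_dehornoy_pos/ipositive_pivot.
  by apply: below_nonneg; rewrite below_cat u_below below_adj.
exact/nonneg_cat/nv/below_nonneg/below_adj.
Qed.

End DenseStep.

Theorem proposition3p1 (n : nat) : (3 <= n)%N ->
  forall f g : bword n,
    in_commutator_subgroup f -> in_commutator_subgroup g ->
    dehornoy_lt f g ->
    exists h : bword n,
      in_commutator_subgroup h /\ dehornoy_lt f h /\ dehornoy_lt h g.
Proof.
move=> _ f g cf cg [w [ew [k pw]]].
have k_gt0 : (0 < k)%N.
  apply: (balanced_ipositive_gt0 _ pw); apply: (balanced_braid_eq ew).
  by apply: balanced_cat; [apply: balanced_binv|]; apply: commutator_subgroup_balanced.
pose a : 'I_n.-1 := Ordinal (leq_ltn_trans (leq_pred k) (ltn_ord k)).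
have ak : nat_of_ord k = (nat_of_ord a).+1 by rewrite /= prednK.
have [u [v [wE [u_below nv]]]] := ipositive_split pw; subst w.
exists (f ++ dense_witness a k u); split; [|split].
- exact/commutator_subgroup_cat/dense_witness_commutator.
- apply: (dehornoy_pos_braid_eq (binvKl _ _)).
  exact/ipositive_dehornoy_pos/dense_witness_ipositive.
- rewrite /dehornoy_lt binv_cat -catA.
  apply: (dehornoy_pos_braid_eq (braid_eq_cat (reflexivity _) ew)).
  exact: dense_witness_inv_cat.
Qed.
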